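(* Let $\Sigma$ be a non-orientable surface (possibly with boundary), let $D\subset\Sigma$ be an oriented diagram of a pseudo-classical knot in $\Sigma\times[0,1]$ with a labeling of its $2$-cabling $D^2$, and let $x$ be a crossing of $D$. Then: (1) Reversing the orientation of $D$, and also relabeling $D^2$, each turns the positive smoothing at $x$ into the negative one and vice versa, regardless of whether $x$ is of type $1$ or type $2$. (2) The crossing change operation at $x$ turns the positive smoothing at $x$ into the negative one and vice versa if $x$ is of type $1$, and does not change which smoothing is positive if $x$ is of type $2$. (3) The positive smoothing at $x$ is the one determined by the crossing of the $4$-crossing pattern of $x$ at which the overgoing arc of $R(D)$ enters the pattern; in particular, the actual direction of the undergoing arc of $D$ at $x$ and the actual labeling of the undergoing arcs of $D^2$ at $x$ do not affect which smoothing at $x$ is positive.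
   Context: $\Sigma\times[0,1]$ is the non-orientable $3$-manifold with fixed product structure; knots in it are represented by diagrams on $\Sigma$. A knot is pseudo-classical if it is an orientation-preserving loop in $\Sigma\times[0,1]$; then its diagram $D$ is an orientation-preserving loop in $\Sigma$. The $2$-cabling $D^2$ replaces $D$ by two parallel copies preserving over/under information; it has two components. A labeling of $D^2$ names one component $R(D)$ and the other $L(D)$; relabeling swaps the names; both components are oriented consistently with $D$. Each crossing $x$ of $D$ gives a pattern of $4$ crossings of $D^2$, which correspond bijectively to the four angles of $D$ at $x$. The input crossing $\mathrm{In}(x)$ is the crossing of the pattern at which both strands through it enter the pattern (traversing in the positive direction). The sign of $x$ is $1$ if $R(D)$ goes over $L(D)$ at $\mathrm{In}(x)$; $-1$ if $L(D)$ goes over $R(D)$ there; $i$ if $R(D)$ goes over itself there; $-i$ if $L(D)$ goes over itself there. $x$ is of type $1$ if $\operatorname{sign}(x)=\pm1$ and of type $2$ if $\operatorname{sign}(x)=\pm i$. A smoothing of $x$ pairs two opposite (vertical) angles at $x$, equivalently two diagonal crossings of the pattern; it is said to be determined by either of these crossings. The smoothing determined by $\mathrm{In}(x)$ is called along the orientation; the other is across the orientation. The positive smoothing at $x$ is the one along the orientation if $\operatorname{sign}(x)\in\{1,i\}$ and across the orientation if $\operatorname{sign}(x)\in\{-1,-i\}$; the other smoothing is negative. The crossing change at $x$ swaps over- and under-branches at $x$. *)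

(* We fix a local chart (a disc) around x in which the two branches of D
   through x are the horizontal axis (branch H) and the vertical axis
   (branch V).  In D^2 each branch is replaced by two parallel copies: the
   copies of H lie at y = +d and y = -d, the copies of V at x = +d and x = -d.
   The 4 crossings of the pattern are the points (+-d, +-d); they are in
   bijection with the 4 angles (quadrants) of D at x.  A sign of a coordinate
   is a bool (true = positive). *)
From Stdlib Require Import Bool.

Inductive branch : Type := H | V.

Definition other_branch (b : branch) : branch :=
  match b with H => V | V => H end.

Record crossing : Type := Crossing {
  over : branch;
  dir : branch -> bool;     (* orientation of D along the branch:
                               true = towards the positive coordinate *)
  rlab : branch -> bool     (* true iff the copy of the branch lying on the
                               positive side (y=+d for H, x=+d for V)
                               belongs to R(D); the other copy is in L(D) *)
}.

Definition under (c : crossing) : branch := other_branch (over c).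

(* a crossing of the 4-crossing pattern = an angle of D at x :
   (sign of x-coordinate, sign of y-coordinate) *)
Definition pcross : Type := (bool * bool)%type.

(* the copy of branch b through the pattern crossing q is the one at
   transverse coordinate [side b q] *)
Definition side (b : branch) (q : pcross) : bool :=
  match b with H => snd q | V => fst q end.

Definition along_coord (b : branch) (q : pcross) : bool :=
  match b with H => fst q | V => snd q end.

(* label of the copy of branch b at transverse side s: true = R(D), false = L(D) *)
Definition label (c : crossing) (b : branch) (s : bool) : bool :=
  if s then rlab c b else negb (rlab c b).

(* Input crossing In(x): both strands (travelling in the positive direction)
   enter the pattern there, i.e. at coordinate opposite to their direction. *)
Definition In (c : crossing) : pcross := (negb (dir c H), negb (dir c V)).

Inductive csign : Type := Plus1 | Minus1 | PlusI | MinusI.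

Definition sign (c : crossing) : csign :=
  match label c (over c) (side (over c) (In c)),
        label c (under c) (side (under c) (In c)) with
  | true, false => Plus1     (* R(D) over L(D) *)
  | false, true => Minus1    (* L(D) over R(D) *)
  | true, true => PlusI      (* R(D) over itself *)
  | false, false => MinusI   (* L(D) over itself *)
  end.

Definition type1 (c : crossing) : Prop := sign c = Plus1 \/ sign c = Minus1.
Definition type2 (c : crossing) : Prop := sign c = PlusI \/ sign c = MinusI.

(* A smoothing pairs two opposite angles, i.e. two diagonal pattern
   crossings.  There are two smoothings, encoded by a bool:
   true = {(+,+),(-,-)}, false = {(+,-),(-,+)}. *)
Definition smoothing : Type := bool.
Definition other_smoothing (s : smoothing) : smoothing := negb s.

Definition smoothing_of (q : pcross) : smoothing := Bool.eqb (fst q) (snd q).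

Definition smoothing_along (c : crossing) : smoothing := smoothing_of (In c).
Definition smoothing_across (c : crossing) : smoothing :=
  other_smoothing (smoothing_along c).

Definition positive_smoothing (c : crossing) : smoothing :=
  match sign c with
  | Plus1 | PlusI => smoothing_along c
  | Minus1 | MinusI => smoothing_across c
  end.

Definition negative_smoothing (c : crossing) : smoothing :=
  other_smoothing (positive_smoothing c).

Definition reverse (c : crossing) : crossing :=
  Crossing (over c) (fun b => negb (dir c b)) (rlab c).

Definition relabel (c : crossing) : crossing :=
  Crossing (over c) (dir c) (fun b => negb (rlab c b)).

Definition crossing_change (c : crossing) : crossing :=
  Crossing (under c) (dir c) (rlab c).

(* The pattern crossing at which the overgoing arc of R(D) enters the
   pattern: it lies on the R-copy of the over branch (transverse side
   s with label R), at the entry coordinate (opposite to the direction of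
   the over branch). *)
Definition R_over_entry (c : crossing) : pcross :=
  let b := over c in
  let s := rlab c b in            (* side of the R copy: label c b s = true *)
  let e := negb (dir c b) in      (* entry coordinate along b *)
  match b with H => (e, s) | V => (s, e) end.

(* Which smoothing is positive is decided by the label of the over strand at
   the input crossing In(x): it is the smoothing along the orientation when
   that strand belongs to R(D), and the one across otherwise.  Reversing the
   orientation moves In(x) to the diagonally opposite crossing, which keeps
   the smoothing along the orientation but puts the over strand on the other
   copy; relabeling swaps the label outright.  Both therefore swap the two
   smoothings.  A crossing change keeps In(x) and makes the former under
   strand the over strand, so the positive smoothing changes exactly when the
   two strands at In(x) carry different labels, i.e. at crossings of type 1.
   Finally, the crossing where the over arc of R(D) enters the pattern shares
   with In(x) the coordinate along the over branch, and also the transverse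
   one exactly when the over strand at In(x) is in R(D). *)
From Stdlib Require Import Bool.

Definition over_label (c : crossing) : bool :=
  label c (over c) (side (over c) (In c)).

Definition under_label (c : crossing) : bool :=
  label c (under c) (side (under c) (In c)).

Lemma label_negb (c : crossing) (b : branch) (s : bool) :
  label c b (negb s) = negb (label c b s).
Proof. destruct s; simpl; now rewrite ?negb_involutive. Qed.

Lemma positive_smoothing_over_label (c : crossing) :
  positive_smoothing c =
  if over_label c then smoothing_along c else smoothing_across c.
Proof.
  unfold positive_smoothing, sign, over_label.
  now destruct (label c (over c) _), (label c (under c) _).
Qed.

Lemma type1_under_label (c : crossing) :
  type1 c -> under_label c = negb (over_label c).
Proof.
  unfold type1, sign, over_label, under_label.
  destruct (label c (over c) _), (label c (under c) _);
    intros [E | E]; easy.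
Qed.

Lemma type2_under_label (c : crossing) :
  type2 c -> under_label c = over_label c.
Proof.
  unfold type2, sign, over_label, under_label.
  destruct (label c (over c) _), (label c (under c) _);
    intros [E | E]; easy.
Qed.

Lemma positive_smoothing_swap (c c' : crossing) :
  smoothing_along c' = smoothing_along c ->
  over_label c' = negb (over_label c) ->
  positive_smoothing c' = negative_smoothing c.
Proof.
  intros Halong Hlabel.
  unfold negative_smoothing.
  rewrite !positive_smoothing_over_label, Hlabel.
  unfold smoothing_across, other_smoothing; rewrite Halong.
  destruct (over_label c); simpl; now rewrite ?negb_involutive.
Qed.

Lemma negative_smoothing_swap (c c' : crossing) :
  positive_smoothing c' = negative_smoothing c ->
  negative_smoothing c' = positive_smoothing c.
Proof.
  unfold negative_smoothing, other_smoothing.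
  intros E; now rewrite E, negb_involutive.
Qed.

Lemma smoothing_along_reverse (c : crossing) :
  smoothing_along (reverse c) = smoothing_along c.
Proof.
  unfold smoothing_along, smoothing_of, In; simpl.
  now destruct (dir c H), (dir c V).
Qed.

Lemma over_label_reverse (c : crossing) :
  over_label (reverse c) = negb (over_label c).
Proof.
  unfold over_label, In; simpl.
  rewrite <- label_negb.
  destruct (over c); simpl; now rewrite ?negb_involutive.
Qed.

Lemma label_relabel (c : crossing) (b : branch) (s : bool) :
  label (relabel c) b s = negb (label c b s).
Proof. destruct s; simpl; now rewrite ?negb_involutive. Qed.

Lemma over_label_relabel (c : crossing) :
  over_label (relabel c) = negb (over_label c).
Proof. apply label_relabel. Qed.

Lemma over_label_crossing_change (c : crossing) :
  over_label (crossing_change c) = under_label c.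
Proof. reflexivity. Qed.

Lemma positive_smoothing_R_over_entry (c : crossing) :
  positive_smoothing c = smoothing_of (R_over_entry c).
Proof.
  rewrite positive_smoothing_over_label.
  destruct c as [o d r].
  unfold over_label, smoothing_across, smoothing_along, other_smoothing,
    R_over_entry, In, label, side, smoothing_of; simpl.
  destruct o; simpl; destruct (d H), (d V), (r H), (r V); reflexivity.
Qed.

Lemma positive_smoothing_reverse (c : crossing) :
  positive_smoothing (reverse c) = negative_smoothing c.
Proof.
  apply positive_smoothing_swap;
    [apply smoothing_along_reverse | apply over_label_reverse].
Qed.

Lemma positive_smoothing_relabel (c : crossing) :
  positive_smoothing (relabel c) = negative_smoothing c.
Proof.
  apply positive_smoothing_swap; [reflexivity | apply over_label_relabel].
Qed.

Lemma positive_smoothing_crossing_change_type1 (c : crossing) :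
  type1 c -> positive_smoothing (crossing_change c) = negative_smoothing c.
Proof.
  intros H1; apply positive_smoothing_swap; [reflexivity |].
  now rewrite over_label_crossing_change, type1_under_label.
Qed.

Lemma positive_smoothing_crossing_change_type2 (c : crossing) :
  type2 c -> positive_smoothing (crossing_change c) = positive_smoothing c.
Proof.
  intros H2.
  rewrite !positive_smoothing_over_label, over_label_crossing_change,
    type2_under_label by exact H2.
  reflexivity.
Qed.

Lemma positive_smoothing_over_data (c c' : crossing) :
  over c' = over c ->
  dir c' (over c) = dir c (over c) ->
  rlab c' (over c) = rlab c (over c) ->
  positive_smoothing c' = positive_smoothing c.
Proof.
  intros Hover Hdir Hrlab.
  rewrite !positive_smoothing_R_over_entry.
  unfold R_over_entry; now rewrite Hover, Hdir, Hrlab.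
Qed.

Theorem lemma3 (c : crossing) :
  (* (1) reversing orientation / relabeling swap positive and negative *)
  (positive_smoothing (reverse c) = negative_smoothing c /\
   negative_smoothing (reverse c) = positive_smoothing c /\
   positive_smoothing (relabel c) = negative_smoothing c /\
   negative_smoothing (relabel c) = positive_smoothing c) /\
  (* (2) crossing change *)
  (type1 c -> positive_smoothing (crossing_change c) = negative_smoothing c /\
              negative_smoothing (crossing_change c) = positive_smoothing c) /\
  (type2 c -> positive_smoothing (crossing_change c) = positive_smoothing c) /\
  (* (3) characterization via the entry point of the over arc of R(D) *)
  (positive_smoothing c = smoothing_of (R_over_entry c) /\
   forall c' : crossing,
     over c' = over c ->
     dir c' (over c) = dir c (over c) ->
     rlab c' (over c) = rlab c (over c) ->
     positive_smoothing c' = positive_smoothing c).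
Proof.
  split; [| split; [| split; [| split]]].
  - split; [| split; [| split]].
    + apply positive_smoothing_reverse.
    + apply negative_smoothing_swap, positive_smoothing_reverse.
    + apply positive_smoothing_relabel.
    + apply negative_smoothing_swap, positive_smoothing_relabel.
  - intros H1; split.
    + now apply positive_smoothing_crossing_change_type1.
    + now apply negative_smoothing_swap,
        positive_smoothing_crossing_change_type1.
  - apply positive_smoothing_crossing_change_type2.
  - apply positive_smoothing_R_over_entry.
  - apply positive_smoothing_over_data.
Qed.
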